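(* Let $D\ge 2$, $\eta=\mathrm{diag}(-1,1,\dots,1)$, and let $g_{\mu\nu}$, $f_{\mu\nu}$ be real symmetric invertible $D\times D$ matrices of Lorentzian signature $(-,+,\dots,+)$, with inverses $g^{\mu\nu}$, $f^{\mu\nu}$. Then there exist real matrices $e_A{}^\mu$ and $L^B{}_\nu$ with $\eta^{AB}e_A{}^\mu e_B{}^\nu=g^{\mu\nu}$ and $\eta_{AB}L^A{}_\mu L^B{}_\nu=f_{\mu\nu}$ such that $e_A{}^\mu L_{B\mu}=e_B{}^\mu L_{A\mu}$ for all $A,B$, if and only if there exists a real matrix $\gamma$ such that (i) $\gamma^\mu{}_\rho\gamma^\rho{}_\nu=g^{\mu\rho}f_{\rho\nu}$ (i.e. $\gamma^2=g^{-1}f$), and (ii) the matrix $f\gamma$ is symmetric.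
   Context: Greek indices are space-time indices and capital Latin indices are Lorentz indices, lowered and raised with $\eta_{AB}$ and $\eta^{AB}$ (so $L_{B\mu}=\eta_{BC}L^C{}_\mu$); repeated indices are summed. *)

From mathcomp Require Import all_boot all_order all_algebra.
From mathcomp Require Import reals.
Set Implicit Arguments. Unset Strict Implicit. Unset Printing Implicit Defensive.
Import Order.TTheory GRing.Theory Num.Theory.
Local Open Scope ring_scope.

Definition eta {R : realType} (n : nat) : 'M[R]_n :=
  \matrix_(i, j) ((i == j)%:R * (if (i : nat) == 0%N then -1 else 1)).

(* A real symmetric matrix has Lorentzian signature (-,+,...,+) iff it is
   congruent to eta (Sylvester's law of inertia). *)
Definition lorentzian {R : realType} (n : nat) (g : 'M[R]_n) : Prop :=
  g^T = g /\ exists P : 'M[R]_n, P \in unitmx /\ P^T *m g *m P = eta n.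

From mathcomp Require Import all_boot all_order all_algebra.
From mathcomp Require Import reals.
Set Implicit Arguments. Unset Strict Implicit. Unset Printing Implicit Defensive.
Import Order.TTheory GRing.Theory Num.Theory.
Local Open Scope ring_scope.

(* In matrix form the vielbein conditions read [e^T J e = g^-1], [L^T J L = f]
   and [e L^T J] symmetric, where [J] is the Minkowski metric.  One direction
   takes [gam = e^T L].  Conversely, writing [g = P^-T J P^-1] by Sylvester,
   the candidate vielbeins are [e = P^T] and [L = P^-1 gam]; everything then
   rests on [gam] being self-adjoint for [g], i.e. [gam^T g = g gam], which
   follows from the symmetry of [f] and [f gam] after cancelling the
   invertible [gam^2 = g^-1 f]. *)

Lemma trmx_congr (R : comNzRingType) n (A B : 'M[R]_n) :
  (A^T *m B *m A)^T = A^T *m B^T *m A.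
Proof. by rewrite !trmx_mul trmxK mulmxA. Qed.

Lemma self_adjoint_of_sqr (R : comUnitRingType) n (g f gam : 'M[R]_n) :
    f^T = f -> f = g *m (gam *m gam) -> gam *m gam \in unitmx ->
    (f *m gam)^T = f *m gam ->
  gam^T *m g = g *m gam.
Proof.
move=> f_sym fE gam2_unit fgam_sym.
apply: (can_inj (mulmxK gam2_unit)).
by rewrite -mulmxA -fE -f_sym -trmx_mul fgam_sym fE !mulmxA.
Qed.

Section Vielbeins.

Variables (R : comUnitRingType) (n : nat) (J : 'M[R]_n).
Hypotheses (J_sym : J^T = J) (J_invol : J *m J = 1%:M).

Lemma gamma_of_vielbeins (e L gi f : 'M[R]_n) :
    e^T *m J *m e = gi -> L^T *m J *m L = f ->
    (e *m L^T *m J)^T = e *m L^T *m J ->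
  (e^T *m L) *m (e^T *m L) = gi *m f /\
  (f *m (e^T *m L))^T = f *m (e^T *m L).
Proof.
move=> <- <- S_sym.
have JLe : J *m (L *m e^T) = e *m L^T *m J.
  by rewrite -S_sym !trmx_mul trmxK J_sym.
have LeJS : L *m e^T = J *m (e *m L^T *m J).
  by rewrite -JLe mulmxA J_invol mul1mx.
split; first by rewrite mulmxA -(mulmxA e^T) LeJS !mulmxA.
have -> : L^T *m J *m L *m (e^T *m L) = L^T *m (e *m L^T *m J) *m L.
  by rewrite -JLe !mulmxA.
by rewrite trmx_congr S_sym.
Qed.

Lemma invmx_congr (P g : 'M[R]_n) :
  P \in unitmx -> P^T *m g *m P = J -> invmx g = P *m J *m P^T.
Proof.
move=> P_unit gP.
have PJPg : P *m J *m P^T *m g = 1%:M.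
  apply: (can_inj (mulmxK P_unit)).
  by rewrite mul1mx -!mulmxA (mulmxA P^T) gP J_invol mulmx1.
have [_ g_unit] := mulmx1_unit PJPg.
by rewrite -[invmx g]mul1mx -PJPg mulmxK.
Qed.

Lemma vielbeins_of_gamma (P g f gam : 'M[R]_n) :
    P \in unitmx -> P^T *m g *m P = J ->
    f = g *m (gam *m gam) -> gam^T *m g = g *m gam ->
  let e := P^T in let L := invmx P *m gam in
  [/\ e^T *m J *m e = invmx g, L^T *m J *m L = f &
      (e *m L^T *m J)^T = e *m L^T *m J].
Proof.
move=> P_unit gP fE gam_adj e L.
have gi := invmx_congr P_unit gP.
have PT_unit : P^T \in unitmx by rewrite unitmx_tr.
have gE : g = invmx P^T *m J *m invmx P.
  by rewrite -gP !mulmxA mulVmx // mul1mx mulmxK.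
split; first by rewrite /e trmxK gi.
  by rewrite fE [RHS]mulmxA -gam_adj gE /L trmx_mul trmx_inv !mulmxA.
have J_unit : J \in unitmx := (mulmx1_unit J_invol).1.
have g_unit : g \in unitmx.
  by rewrite gE !unitmx_mul !unitmx_inv PT_unit J_unit P_unit.
have gam_tr : gam^T = g *m gam *m invmx g by rewrite -gam_adj mulmxK.
rewrite /e /L !trmx_mul !trmxK J_sym trmx_inv gam_tr gi gE !mulmxA.
rewrite mulmxV // mul1mx -(mulmxA _ P^T) mulmxV // mulmx1.
by rewrite -(mulmxA _ J J) J_invol mulmx1.
Qed.

End Vielbeins.

Lemma eta_tr (R : realType) n : (eta n : 'M[R]_n)^T = eta n.
Proof.
apply/matrixP => i j; rewrite !mxE eq_sym.
by case: eqP => [->|]; rewrite ?mul0r.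
Qed.

Lemma eta_mulmx_eta (R : realType) n : (eta n : 'M[R]_n) *m eta n = 1%:M.
Proof.
apply/matrixP => i j; rewrite !mxE (bigD1 i) //= big1 ?addr0.
  rewrite !mxE eqxx mul1r; case: (i == j); rewrite ?mul0r ?mulr0 ?mul1r //.
  by case: ifP; rewrite ?mulrNN ?mulr1.
by move=> k /negPf nk; rewrite !mxE eq_sym nk !mul0r.
Qed.

Theorem proposition3 (R : realType) (D : nat) (hD : (2 <= D)%N)
    (g f : 'M[R]_D)
    (hg : g \in unitmx) (hf : f \in unitmx)
    (hgL : lorentzian g) (hfL : lorentzian f) :
  (exists e L : 'M[R]_D,
      e^T *m eta D *m e = invmx g /\
      L^T *m eta D *m L = f /\
      (e *m L^T *m eta D)^T = e *m L^T *m eta D)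
  <->
  (exists gam : 'M[R]_D,
      gam *m gam = invmx g *m f /\
      (f *m gam)^T = f *m gam).
Proof.
have eta_sym := eta_tr R D; have eta_invol := eta_mulmx_eta R D.
split=> [[e [L [eg [Lf S_sym]]]] | [gam [gam2 fgam_sym]]].
  exists (e^T *m L).
  exact (gamma_of_vielbeins eta_sym eta_invol eg Lf S_sym).
have [f_sym _] := hfL; have [_ [P [P_unit gP]]] := hgL.
have fE : f = g *m (gam *m gam) by rewrite gam2 mulKVmx.
have gam2_unit : gam *m gam \in unitmx.
  by rewrite gam2 unitmx_mul unitmx_inv hg hf.
have gam_adj := self_adjoint_of_sqr f_sym fE gam2_unit fgam_sym.
have [eg Lf S_sym] := vielbeins_of_gamma eta_sym eta_invol P_unit gP fE gam_adj.
by exists P^T, (invmx P *m gam).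
Qed.
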